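(* Let $R=\{u\in L:(u,u)=2\}$. Then $W(x)=\{\alpha x+\beta y+\gamma z\in R:\alpha\equiv1,\ \beta\equiv0,\ \gamma\equiv0 \pmod 2\}$, $W(y)=\{\alpha x+\beta y+\gamma z\in R:\beta\equiv1,\ \alpha\equiv0,\ \gamma\equiv0 \pmod 2\}$, $W(z)=\{\alpha x+\beta y+\gamma z\in R:\gamma\equiv1,\ \alpha\equiv0,\ \beta\equiv0 \pmod 2\}$.
   Context: $\mathbb F$ is a field of characteristic zero, $\mathfrak{sl}_2$ the Lie algebra of $2\times2$ trace-zero matrices over $\mathbb F$ with trace form $(u,v)=\mathrm{tr}(uv)$. Equitable basis: $x=\begin{pmatrix}1&0\\0&-1\end{pmatrix}$, $y=\begin{pmatrix}-1&2\\0&1\end{pmatrix}$, $z=\begin{pmatrix}-1&0\\-2&1\end{pmatrix}$, $L=\mathbb Zx\oplus\mathbb Zy\oplus\mathbb Zz$. For $u\in\{x,y,z\}$, $r_u(v)=v-(u,v)u$, and $W=\langle r_x,r_y,r_z\rangle$ (the Weyl group of the Kac–Moody algebra with Cartan matrix having $2$ on the diagonal and $-2$ off the diagonal, whose set of real roots equals $R$). $W(u)$ denotes the $W$-orbit of $u$. *)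

From HB Require Import structures.
From mathcomp Require Import all_boot all_order all_algebra.
Set Implicit Arguments. Unset Strict Implicit. Unset Printing Implicit Defensive.
Import GRing.Theory Num.Theory.
Local Open Scope ring_scope.

Definition mx2 (F : fieldType) (a b c d : F) : 'M[F]_2 :=
  \matrix_(i < 2, j < 2)
    if i == ord0 then (if j == ord0 then a else b) else (if j == ord0 then c else d).

Definition eqx (F : fieldType) : 'M[F]_2 := mx2 1 0 0 (-1).
Definition eqy (F : fieldType) : 'M[F]_2 := mx2 (-1) 2 0 1.
Definition eqz (F : fieldType) : 'M[F]_2 := mx2 (-1) 0 (-2) 1.

Definition trform (F : fieldType) (u v : 'M[F]_2) : F := \tr (u *m v).

Definition refl (F : fieldType) (u v : 'M[F]_2) : 'M[F]_2 := v - trform u v *: u.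

Definition comb (F : fieldType) (a b c : int) : 'M[F]_2 :=
  a%:~R *: eqx F + b%:~R *: eqy F + c%:~R *: eqz F.

(* W(u): the orbit of u under W = <r_x, r_y, r_z>.  Since the generators are
   involutions, W consists exactly of finite compositions of generators, so
   the orbit is the closure of {u} under the three reflections. *)
Inductive W_orbit (F : fieldType) (u : 'M[F]_2) : 'M[F]_2 -> Prop :=
  | W_orbit_self : W_orbit u u
  | W_orbit_step (w v : 'M[F]_2) :
      W_orbit u v -> (w = eqx F \/ w = eqy F \/ w = eqz F) ->
      W_orbit u (refl w v).

(* In the coordinates v = a x + b y + c z the trace form has Gram matrix with 2
   on the diagonal and -2 off it, so (v, v) = 2 Q(a, b, c) with
   Q(a, b, c) = a^2 + b^2 + c^2 - 2ab - 2bc - 2ca, and the three reflections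
   act on coordinates by the "Vieta jumps"
     r_x : a |-> 2b + 2c - a,   r_y : b |-> 2a + 2c - b,   r_z : c |-> 2a + 2b - c.
   These moves preserve Q and the parities of a, b, c, which gives the
   inclusion of each orbit in the corresponding parity class of R.
   Conversely, on Q = 1 the jump in the coordinate of largest absolute value
   strictly decreases a^2 + b^2 + c^2 unless the point is one of (+-1,0,0),
   (0,+-1,0), (0,0,+-1); so every root descends to such an endpoint, which the
   parities identify, and reflections are involutions, so the descent can be
   run backwards inside the orbit.  Characteristic zero is used only to read
   Q = 1 off the equation (v, v) = 2 in F. *)

From HB Require Import structures.
From mathcomp Require Import all_boot all_order all_algebra.
From mathcomp Require Import zify ring.
Import GRing.Theory Num.Theory.
Local Open Scope ring_scope.

(* Half the norm of a x + b y + c z, as an integral quadratic form. *)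
Definition Q (a b c : int) : int :=
  a * a + b * b + c * c - 2 * a * b - 2 * b * c - 2 * c * a.

(* Vieta jumping on Q = 1: if |a| is maximal, the jump a |-> 2b + 2c - a
   (the other root of Q(., b, c) = 1) strictly decreases |a|, unless
   (a, b, c) = (+-1, 0, 0).  The key identity is a (2b + 2c - a) = (b - c)^2 - 1,
   and b c >= 0 because 4 b c = (a - b - c)^2 - 1. *)
Lemma vieta_jump {a b c : int} : Q a b c = 1 -> b * b <= a * a -> c * c <= a * a ->
  (a * a = 1 /\ b = 0 /\ c = 0) \/ (2 * b + 2 * c - a) * (2 * b + 2 * c - a) < a * a.
Proof.
rewrite /Q => hQ hb hc.
have hbc : 0 <= b * c.
  have e : 4 * (b * c) = (a - b - c) * (a - b - c) - 1 by lia.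
  by have := sqr_ge0 (a - b - c); rewrite expr2; lia.
have prod : a * (2 * b + 2 * c - a) = (b - c) * (b - c) - 1 by lia.
have [eqbc|nebc] := eqVneq b c.
- left; subst c.
  have sq : (a * a) * ((4 * b - a) * (4 * b - a)) = 1 by nia.
  have a2 : a * a = 1.
    by have := sqr_ge0 a; have := sqr_ge0 (4 * b - a); rewrite !expr2; nia.
  nia.
- right.
  have dist : (b - c) * (b - c) <= a * a.
    have [cb|bc] := lerP (c * c) (b * b).
    + have : c * c <= b * c by nia.
      nia.
    + have : b * b <= b * c by nia.
      nia.
  have dist1 : 1 <= (b - c) * (b - c).
    have : b - c != 0 by rewrite subr_eq0.
    nia.
  set a' := 2 * b + 2 * c - a in prod *.
  have : (a * a') * (a * a') < (a * a) * (a * a) by nia.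
  nia.
Qed.

(* Since Q is symmetric, on Q = 1 either a^2 + b^2 + c^2 = 1 or one of the
   three jumps decreases the corresponding square. *)
Lemma descent_step {a b c : int} : Q a b c = 1 ->
  [\/ a * a + b * b + c * c = 1,
      (2 * b + 2 * c - a) * (2 * b + 2 * c - a) < a * a,
      (2 * a + 2 * c - b) * (2 * a + 2 * c - b) < b * b |
      (2 * a + 2 * b - c) * (2 * a + 2 * b - c) < c * c].
Proof.
move=> hQ.
have hQb : Q b a c = 1 by rewrite -hQ /Q; ring.
have hQc : Q c a b = 1 by rewrite -hQ /Q; ring.
have : (b * b <= a * a /\ c * c <= a * a) \/ (a * a <= b * b /\ c * c <= b * b) \/
       (a * a <= c * c /\ b * b <= c * c) by lia.
case=> [[hb hc]|[[ha hc]|[ha hb]]].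
- case: (vieta_jump hQ hb hc) => [[ha [-> ->]]|]; last by constructor 2.
  by constructor 1; lia.
- case: (vieta_jump hQb ha hc) => [[hb [-> ->]]|]; last by constructor 3.
  by constructor 1; lia.
- case: (vieta_jump hQc ha hb) => [[hc [-> ->]]|]; last by constructor 4.
  by constructor 1; lia.
Qed.

Lemma intr_inj_pchar0 {R : fieldType} : [pchar R] =i pred0 ->
  injective (fun z : int => z%:~R : R).
Proof.
move=> /pcharf0P nat0 m n /= /eqP; rewrite -subr_eq0 -intrB.
have -> : ((m - n)%:~R == 0 :> R) = (m - n == 0).
  by case: (m - n) => k; rewrite ?NegzE ?mulrNz ?oppr_eq0 nat0.
by rewrite subr_eq0 => /eqP.
Qed.

Section Coordinates.
Variable F : fieldType.

Lemma comb_entries a b c : comb F a b c =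
  mx2 (a - b - c)%:~R (2 * b)%:~R (- (2 * c))%:~R (b + c - a)%:~R.
Proof.
apply/matrixP=> i j; rewrite !mxE.
by case: i => [[|[|//]] ?]; case: j => [[|[|//]] ?] /=; ring.
Qed.

Lemma mx2_mul_trace (p q r s p' q' r' s' : F) :
  \tr (mx2 p q r s *m mx2 p' q' r' s') = p * p' + q * r' + r * q' + s * s'.
Proof.
rewrite /mxtrace !big_ord_recl big_ord0 !mxE !big_ord_recl !big_ord0 !mxE /=.
ring.
Qed.

Definition gram (a b c p q r : int) : int :=
  2 * (a * p + b * q + c * r) - 2 * (a * q + b * p + b * r + c * q + c * p + a * r).

Lemma trform_comb a b c p q r :
  trform (comb F a b c) (comb F p q r) = (gram a b c p q r)%:~R.
Proof. by rewrite /trform !comb_entries mx2_mul_trace /gram; ring. Qed.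

Lemma trform_comb_self a b c :
  trform (comb F a b c) (comb F a b c) = (2 * Q a b c)%:~R.
Proof. by rewrite trform_comb; congr intmul; rewrite /gram /Q; ring. Qed.

Lemma refl_comb p q r a b c : let k := gram p q r a b c in
  refl (comb F p q r) (comb F a b c) = comb F (a - k * p) (b - k * q) (c - k * r).
Proof.
rewrite /refl trform_comb !comb_entries; apply/matrixP=> i j; rewrite !mxE.
by case: i => [[|[|//]] ?]; case: j => [[|[|//]] ?] /=; ring.
Qed.

Lemma eqx_comb : eqx F = comb F 1 0 0.
Proof. by rewrite comb_entries /eqx; congr mx2. Qed.
Lemma eqy_comb : eqy F = comb F 0 1 0.
Proof. by rewrite comb_entries /eqy; congr mx2. Qed.
Lemma eqz_comb : eqz F = comb F 0 0 1.
Proof. by rewrite comb_entries /eqz; congr mx2. Qed.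

Lemma refl_x a b c : refl (eqx F) (comb F a b c) = comb F (2 * b + 2 * c - a) b c.
Proof. by rewrite eqx_comb refl_comb /gram; congr comb; ring. Qed.
Lemma refl_y a b c : refl (eqy F) (comb F a b c) = comb F a (2 * a + 2 * c - b) c.
Proof. by rewrite eqy_comb refl_comb /gram; congr comb; ring. Qed.
Lemma refl_z a b c : refl (eqz F) (comb F a b c) = comb F a b (2 * a + 2 * b - c).
Proof. by rewrite eqz_comb refl_comb /gram; congr comb; ring. Qed.

Lemma refl_involutive (w v : 'M[F]_2) : trform w w = 2 -> refl w (refl w v) = v.
Proof.
move=> ww; rewrite {1}/refl /trform mulmxBr -scalemxAr raddfB /= mxtraceZ.
rewrite -/(trform w w) -/(trform w v) ww /refl; set t := trform w v.
by rewrite -addrA -opprD -scalerDl (_ : t + _ = 0) ?scale0r ?oppr0 ?addr0 //; ring.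
Qed.

Definition generator (w : 'M[F]_2) : Prop := w = eqx F \/ w = eqy F \/ w = eqz F.

Lemma generator_norm w : generator w -> trform w w = 2.
Proof.
by case=> [->|[->|->]]; rewrite ?eqx_comb ?eqy_comb ?eqz_comb trform_comb_self.
Qed.

Lemma orbit_back u w v : generator w -> W_orbit u (refl w v) -> W_orbit u v.
Proof.
move=> gw /W_orbit_step/(_ gw).
by rewrite refl_involutive // generator_norm.
Qed.

Lemma orbit_invariants (a0 b0 c0 : int) v : W_orbit (comb F a0 b0 c0) v ->
  exists a b c, [/\ v = comb F a b c, Q a b c = Q a0 b0 c0,
    (a %% 2 = a0 %% 2)%Z, (b %% 2 = b0 %% 2)%Z & (c %% 2 = c0 %% 2)%Z].
Proof.
elim=> [|w _ _ [a [b [c [-> hQ ha hb hc]]]] [->|[->|->]]].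
- by exists a0, b0, c0.
- exists (2 * b + 2 * c - a), b, c; rewrite refl_x -hQ /Q; split=> //; lia.
- exists a, (2 * a + 2 * c - b), c; rewrite refl_y -hQ /Q; split=> //; lia.
- exists a, b, (2 * a + 2 * b - c); rewrite refl_z -hQ /Q; split=> //; lia.
Qed.

Lemma orbit_descent (n : nat) (a b c : int) :
  a * a + b * b + c * c <= n%:Z -> Q a b c = 1 ->
  W_orbit (comb F (a %% 2)%Z (b %% 2)%Z (c %% 2)%Z) (comb F a b c).
Proof.
elim: n a b c => [|n IH] a b c hn hQ; first by move: hQ; rewrite /Q; nia.
have gx : generator (eqx F) by left.
have gy : generator (eqy F) by right; left.
have gz : generator (eqz F) by right; right.
case: (descent_step hQ) => [small|jx|jy|jz].
- have : ((a = 1 \/ a = -1) /\ b = 0 /\ c = 0) \/ (a = 0 /\ (b = 1 \/ b = -1) /\ c = 0) \/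
         (a = 0 /\ b = 0 /\ (c = 1 \/ c = -1)) by nia.
  case=> [[[->|->] [-> ->]]|[[-> [[->|->] ->]]|[-> [-> [->|->]]]]];
    try exact: W_orbit_self.
  + by apply: orbit_back gx _; rewrite refl_x; apply: W_orbit_self.
  + by apply: orbit_back gy _; rewrite refl_y; apply: W_orbit_self.
  + by apply: orbit_back gz _; rewrite refl_z; apply: W_orbit_self.
- apply: orbit_back gx _; rewrite refl_x.
  have -> : (a %% 2 = (2 * b + 2 * c - a) %% 2)%Z by lia.
  by apply: IH; rewrite /Q in hQ *; lia.
- apply: orbit_back gy _; rewrite refl_y.
  have -> : (b %% 2 = (2 * a + 2 * c - b) %% 2)%Z by lia.
  by apply: IH; rewrite /Q in hQ *; lia.
- apply: orbit_back gz _; rewrite refl_z.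
  have -> : (c %% 2 = (2 * a + 2 * b - c) %% 2)%Z by lia.
  by apply: IH; rewrite /Q in hQ *; lia.
Qed.

Lemma orbit_unit_vector (charF0 : [pchar F] =i pred0) (a0 b0 c0 : int) :
  Q a0 b0 c0 = 1 -> (a0 %% 2 = a0)%Z -> (b0 %% 2 = b0)%Z -> (c0 %% 2 = c0)%Z ->
  forall v, W_orbit (comb F a0 b0 c0) v <->
    exists a b c, [/\ v = comb F a b c, trform v v = 2,
      (a %% 2 = a0)%Z, (b %% 2 = b0)%Z & (c %% 2 = c0)%Z].
Proof.
move=> hQ0 ha0 hb0 hc0 v; split.
- case/orbit_invariants=> a [b [c [-> hQ ha hb hc]]].
  exists a, b, c; rewrite trform_comb_self hQ hQ0 -ha0 -hb0 -hc0; split=> //.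
- case=> a [b [c [-> norm2 <- <- <-]]].
  have hQ : Q a b c = 1.
    move: norm2; rewrite trform_comb_self -[2 in RHS]/(2%:~R).
    by move=> /(intr_inj_pchar0 charF0); lia.
  by apply: (@orbit_descent (absz (a * a + b * b + c * c))) => //; lia.
Qed.
End Coordinates.

Theorem proposition7p12 (F : fieldType) (charF0 : [pchar F] =i pred0) :
  (forall v : 'M[F]_2, W_orbit (eqx F) v <->
     exists a b c : int, [/\ v = comb F a b c, trform v v = 2,
       (a %% 2)%Z = 1, (b %% 2)%Z = 0 & (c %% 2)%Z = 0]) /\
  (forall v : 'M[F]_2, W_orbit (eqy F) v <->
     exists a b c : int, [/\ v = comb F a b c, trform v v = 2,
       (b %% 2)%Z = 1, (a %% 2)%Z = 0 & (c %% 2)%Z = 0]) /\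
  (forall v : 'M[F]_2, W_orbit (eqz F) v <->
     exists a b c : int, [/\ v = comb F a b c, trform v v = 2,
       (c %% 2)%Z = 1, (a %% 2)%Z = 0 & (b %% 2)%Z = 0]).
Proof.
rewrite eqx_comb eqy_comb eqz_comb.
split; [|split] => v; rewrite orbit_unit_vector //;
  by split=> -[a [b [c [-> ? ? ? ?]]]]; exists a, b, c.
Qed.
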